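(* Let $A$ be a quasi-quantale such that $(\bigvee X)a=\bigvee\{xa\mid x\in X\}$ for every subset $X\subseteq A$ and every $a\in A$. Then for each multiplicative nucleus $d$ on $A$, the set of fixed points $A_d=\{a\in A\mid d(a)=a\}$ (with the order of $A$, joins $d(\bigvee X)$ and meets as in $A$) is a frame.
   Context: A quasi-quantale is a complete lattice $A$ equipped with an associative binary operation $(a,b)\mapsto ab$ such that for every directed subset $X\subseteq A$ (non-empty, and any two elements of $X$ have an upper bound in $X$) and every $a\in A$: $(\bigvee X)a=\bigvee\{xa\mid x\in X\}$ and $a(\bigvee X)=\bigvee\{ax\mid x\in X\}$. An inflator on $A$ is a monotone map $d\colon A\to A$ with $a\leq d(a)$ for all $a$. A multiplicative nucleus is an inflator $d$ with $d\circ d=d$, $d(a\wedge b)=d(a)\wedge d(b)$ and $d(ab)=d(a)\wedge d(b)$ for all $a,b\in A$. A frame is a complete lattice satisfying $a\wedge\bigvee X=\bigvee\{a\wedge x\mid x\in X\}$ for all $a$ and all subsets $X$. *)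

Section Defs.
Context {A : Type} (le : A -> A -> Prop).

Definition is_complete_lattice (sup : (A -> Prop) -> A) : Prop :=
  (forall a, le a a) /\
  (forall a b c, le a b -> le b c -> le a c) /\
  (forall a b, le a b -> le b a -> a = b) /\
  (forall (X : A -> Prop) x, X x -> le x (sup X)) /\
  (forall (X : A -> Prop) z, (forall x, X x -> le x z) -> le (sup X) z).

Definition meet (sup : (A -> Prop) -> A) (a b : A) : A :=
  sup (fun z => le z a /\ le z b).

Definition directed (X : A -> Prop) : Prop :=
  (exists x, X x) /\
  (forall x y, X x -> X y -> exists z, X z /\ le x z /\ le y z).

Definition rimage (mul : A -> A -> A) (X : A -> Prop) (a : A) : A -> Prop :=
  fun y => exists x, X x /\ y = mul x a.
Definition limage (mul : A -> A -> A) (a : A) (X : A -> Prop) : A -> Prop :=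
  fun y => exists x, X x /\ y = mul a x.

Definition quasi_quantale (sup : (A -> Prop) -> A) (mul : A -> A -> A) : Prop :=
  is_complete_lattice sup /\
  (forall a b c, mul (mul a b) c = mul a (mul b c)) /\
  (forall (X : A -> Prop) a, directed X ->
     mul (sup X) a = sup (rimage mul X a) /\
     mul a (sup X) = sup (limage mul a X)).

Definition inflator (d : A -> A) : Prop :=
  (forall a b, le a b -> le (d a) (d b)) /\ (forall a, le a (d a)).

Definition multiplicative_nucleus (sup : (A -> Prop) -> A) (mul : A -> A -> A)
  (d : A -> A) : Prop :=
  inflator d /\
  (forall a, d (d a) = d a) /\
  (forall a b, d (meet sup a b) = meet sup (d a) (d b)) /\
  (forall a b, d (mul a b) = meet sup (d a) (d b)).

Definition fixed_points (d : A -> A) : A -> Prop := fun a => d a = a.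

Definition is_lub_in (P : A -> Prop) (X : A -> Prop) (s : A) : Prop :=
  P s /\ (forall x, X x -> le x s) /\
  (forall z, P z -> (forall x, X x -> le x z) -> le s z).

Definition is_glb_in (P : A -> Prop) (X : A -> Prop) (m : A) : Prop :=
  P m /\ (forall x, X x -> le m x) /\
  (forall z, P z -> (forall x, X x -> le z x) -> le z m).

Definition pair_set (a b : A) : A -> Prop := fun y => y = a \/ y = b.

(* The sub-poset (P, le) is a frame: a complete lattice (every subset of P
   has a join in P) in which a /\ \/X = \/ {a /\ x | x in X}, all joins
   and meets computed in (P, le). *)
Definition is_frame_sub (P : A -> Prop) : Prop :=
  (forall X : A -> Prop, (forall x, X x -> P x) -> exists s, is_lub_in P X s) /\
  (forall (a : A) (X : A -> Prop) s m t,
     P a -> (forall x, X x -> P x) ->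
     is_lub_in P X s ->
     is_glb_in P (pair_set a s) m ->
     is_lub_in P (fun y => exists x, X x /\ is_glb_in P (pair_set a x) y) t ->
     m = t).

End Defs.

(* Since d is idempotent and meet-preserving, A_d is closed under the meets of
   A and d(\/X) is the join of X in A_d.  For the frame law, with a and all
   x in X fixed, d(ab) = d(a) /\ d(b) gives
   a /\ d(\/X) = d((\/X) a) = d(\/{x a | x in X}), and x a <= d(x a) = x /\ a,
   so a /\ d(\/X) <= d(\/{a /\ x | x in X}); the converse holds in any
   lattice. *)

From Corelib Require Import ssreflect.

Section FixedPointFrame.

Context {A : Type} {le : A -> A -> Prop} {sup : (A -> Prop) -> A}.
Context {mul : A -> A -> A} {d : A -> A}.

Hypothesis lattice : is_complete_lattice le sup.
Hypothesis nucleus : multiplicative_nucleus le sup mul d.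
Hypothesis mul_sup_distr :
  forall (X : A -> Prop) (a : A), mul (sup X) a = sup (rimage mul X a).

Lemma le_trans a b c : le a b -> le b c -> le a c.
Proof. by case: lattice => _ [trans _]; apply: trans. Qed.

Lemma le_antisym a b : le a b -> le b a -> a = b.
Proof. by case: lattice => _ [_ [antisym _]]; apply: antisym. Qed.

Lemma sup_ub (X : A -> Prop) x : X x -> le x (sup X).
Proof. by case: lattice => _ [_ [_ [ub _]]]; apply: ub. Qed.

Lemma sup_least (X : A -> Prop) z : (forall x, X x -> le x z) -> le (sup X) z.
Proof. by case: lattice => _ [_ [_ [_ least]]]; apply: least. Qed.

Lemma meet_lb_l a b : le (meet le sup a b) a.
Proof. by apply: sup_least => z []. Qed.

Lemma meet_lb_r a b : le (meet le sup a b) b.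
Proof. by apply: sup_least => z []. Qed.

Lemma meet_glb a b z : le z a -> le z b -> le z (meet le sup a b).
Proof. by move=> za zb; apply: sup_ub. Qed.

Lemma meetC a b : meet le sup a b = meet le sup b a.
Proof. by apply: le_antisym; apply: meet_glb; apply: meet_lb_r || apply: meet_lb_l. Qed.

Lemma lub_in_unique {P X : A -> Prop} {s s'} :
  is_lub_in le P X s -> is_lub_in le P X s' -> s = s'.
Proof.
move=> [Ps [ubs leasts]] [Ps' [ubs' leasts']].
by apply: le_antisym; [apply: leasts | apply: leasts'].
Qed.

Lemma glb_in_unique {P X : A -> Prop} {m m'} :
  is_glb_in le P X m -> is_glb_in le P X m' -> m = m'.
Proof.
move=> [Pm [lbm greatm]] [Pm' [lbm' greatm']].
by apply: le_antisym; [apply: greatm' | apply: greatm].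
Qed.

Lemma lub_in_ext (P X Y : A -> Prop) s :
  (forall x, X x <-> Y x) -> is_lub_in le P X s -> is_lub_in le P Y s.
Proof.
move=> XY [Ps [ubs leasts]]; split=> //.
split=> [x /XY | z Pz ubz]; first exact: ubs.
by apply: leasts => // x /XY; apply: ubz.
Qed.

Lemma nucleus_mono a b : le a b -> le (d a) (d b).
Proof. by case: nucleus => [[mono _] _]; apply: mono. Qed.

Lemma nucleus_infl a : le a (d a).
Proof. by case: nucleus => [[_ infl] _]; apply: infl. Qed.

Lemma nucleus_idem a : d (d a) = d a.
Proof. by case: nucleus => _ [idem _]; apply: idem. Qed.

Lemma nucleus_meet a b : d (meet le sup a b) = meet le sup (d a) (d b).
Proof. by case: nucleus => _ [_ [dmeet _]]; apply: dmeet. Qed.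

Lemma nucleus_mul a b : d (mul a b) = meet le sup (d a) (d b).
Proof. by case: nucleus => _ [_ [_ dmul]]; apply: dmul. Qed.

Lemma fixed_sup_lub (X : A -> Prop) :
  is_lub_in le (fixed_points d) X (d (sup X)).
Proof.
split; first exact: nucleus_idem.
split=> [x Xx | z dz ubz].
- by apply: le_trans (nucleus_infl _); apply: sup_ub.
- by rewrite -dz; apply: nucleus_mono; apply: sup_least.
Qed.

Lemma fixed_meet_glb {a b} :
  fixed_points d a -> fixed_points d b ->
  is_glb_in le (fixed_points d) (pair_set a b) (meet le sup a b).
Proof.
move=> da db; split; first by rewrite /fixed_points nucleus_meet da db.
split=> [x [->|->] | z _ lbz]; first exact: meet_lb_l; first exact: meet_lb_r.
by apply: meet_glb; apply: lbz; [left | right].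
Qed.

Lemma fixed_meet_sup_distr a (X : A -> Prop) :
  fixed_points d a -> (forall x, X x -> fixed_points d x) ->
  meet le sup a (d (sup X)) =
  d (sup (fun y => exists x, X x /\ y = meet le sup a x)).
Proof.
move=> da dX.
apply: le_antisym.
- rewrite meetC -{1}da -nucleus_mul mul_sup_distr.
  apply: nucleus_mono; apply: sup_least => _ [x [Xx ->]].
  apply: le_trans (nucleus_infl _) _.
  rewrite nucleus_mul (dX x Xx) da meetC.
  by apply: sup_ub; exists x.
- have [_ [_ leastY]] := fixed_sup_lub
    (fun y => exists x, X x /\ y = meet le sup a x).
  apply: leastY => [|_ [x [Xx ->]]].
  + by case: (fixed_meet_glb da (nucleus_idem (sup X))).
  + apply: meet_glb; first exact: meet_lb_l.
    apply: le_trans (meet_lb_r _ _) _.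
    by have [_ [ubX _]] := fixed_sup_lub X; apply: ubX.
Qed.

Lemma fixed_points_frame : is_frame_sub le (fixed_points d).
Proof.
split=> [X _ | a X s m t da dX lub_s glb_m lub_t].
  by exists (d (sup X)); apply: fixed_sup_lub.
rewrite (lub_in_unique lub_s (fixed_sup_lub X)) in glb_m.
rewrite (glb_in_unique glb_m (fixed_meet_glb da (nucleus_idem _))).
rewrite fixed_meet_sup_distr //; apply: lub_in_unique (fixed_sup_lub _) _.
apply: lub_in_ext lub_t => y; split=> [[x [Xx glb_y]] | [x [Xx ->]]].
- by exists x; split=> //; apply: glb_in_unique glb_y (fixed_meet_glb da (dX x Xx)).
- by exists x; split=> //; apply: fixed_meet_glb; [| apply: dX].
Qed.

End FixedPointFrame.

Theorem corollary3p11 (A : Type) (le : A -> A -> Prop)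
  (sup : (A -> Prop) -> A) (mul : A -> A -> A) :
  quasi_quantale le sup mul ->
  (forall (X : A -> Prop) (a : A), mul (sup X) a = sup (rimage mul X a)) ->
  forall d : A -> A, multiplicative_nucleus le sup mul d ->
    is_frame_sub le (fixed_points d) /\
    (forall X : A -> Prop, (forall x, X x -> fixed_points d x) ->
       is_lub_in le (fixed_points d) X (d (sup X))) /\
    (forall a b, fixed_points d a -> fixed_points d b ->
       is_glb_in le (fixed_points d) (pair_set a b) (meet le sup a b)).
Proof.
move=> [lattice _] mul_sup_distr d nucleus.
split; first exact: fixed_points_frame lattice nucleus mul_sup_distr.
split=> [X _ | a b]; first exact: fixed_sup_lub lattice nucleus X.
exact: (fixed_meet_glb lattice nucleus).
Qed.
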